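(* Let $P$ be a finite set of points in the plane, and let $T^*$ be a spanning tree of $P$ (with straight-line edges between points of $P$) that minimizes the Wiener index among all spanning trees of $P$. Then $T^*$ is planar, i.e., no two edges of $T^*$ cross each other.
   Context: For a spanning tree $T$ of $P$, each edge $(p,q)$ has weight equal to the Euclidean distance $|pq|$. For $p,q\in P$, $\delta_T(p,q)$ denotes the total weight of the unique path between $p$ and $q$ in $T$. The Wiener index of $T$ is $W(T)=\sum_{\{p,q\}\subseteq P}\delta_T(p,q)$, the sum over all pairs of points of $P$. *)

From HB Require Import structures.
From mathcomp Require Import all_boot all_order all_algebra.
From mathcomp Require Import reals.
From Stdlib Require Import ClassicalEpsilon.
Set Implicit Arguments. Unset Strict Implicit. Unset Printing Implicit Defensive.
Import Order.TTheory GRing.Theory Num.Theory.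
Local Open Scope ring_scope.

Section Geo.
Variables (R : realType) (T : finType) (pos : T -> R * R).

Definition edist (p q : T) : R :=
  Num.sqrt (((pos p).1 - (pos q).1) ^+ 2 + ((pos p).2 - (pos q).2) ^+ 2).

Definition simple_graph (e : rel T) : Prop :=
  (forall x y, e x y = e y x) /\ (forall x, ~~ e x x).

Definition acyclic (e : rel T) : Prop :=
  forall c : seq T, uniq c -> (3 <= size c)%N -> ~~ cycle e c.

Definition spanning_tree (e : rel T) : Prop :=
  [/\ simple_graph e, (forall x y, connect e x y) & acyclic e].

Fixpoint walk_weight (x : T) (s : seq T) : R :=
  match s with
  | [::] => 0
  | y :: s' => edist x y + walk_weight y s'
  end.

(* s is the (vertex list after p of a) simple path from p to q in e *)
Definition tpath (e : rel T) (p q : T) (s : seq T) : bool :=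
  [&& path e p s, last p s == q & uniq (p :: s)].

(* delta_T(p,q): weight of the (unique, in a tree) path from p to q *)
Definition delta (e : rel T) (p q : T) : R :=
  walk_weight p (epsilon (inhabits [::]) (fun s => tpath e p q s)).

(* Wiener index: sum over unordered pairs {p,q} (each counted once) *)
Definition wiener (e : rel T) : R :=
  \sum_(p : T) \sum_(q : T | (enum_rank p < enum_rank q)%N) delta e p q.

Definition segments_cross (p q r s : T) : Prop :=
  exists t u : R, [/\ 0 < t < 1, 0 < u < 1,
    (1 - t) * (pos p).1 + t * (pos q).1 = (1 - u) * (pos r).1 + u * (pos s).1 &
    (1 - t) * (pos p).2 + t * (pos q).2 = (1 - u) * (pos r).2 + u * (pos s).2].

Definition plane_tree (e : rel T) : Prop :=
  forall p q r s, e p q -> e r s ->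
    ~~ ((p == r) && (q == s) || (p == s) && (q == r)) ->
    ~ segments_cross p q r s.

End Geo.

(* If two edges of a spanning tree cross, some other spanning tree has a smaller
   Wiener index.  Removing a tree edge uv splits the vertices into the sides of u
   and v; replacing uv by an edge xy between the sides (x on the side of u) only
   changes the distance of a pair p, q separated by the sides, and by
   d(p,x) + |xy| + d(y,q) - d(p,u) - |uv| - d(v,q).
   Orient the crossing edges as ab and cd so that b and c remain connected once
   both are removed.  If b = c the two segments overlap, say d lies on ab, and
   trading ab for ad shortens every affected path.  Otherwise put
   f(q) = d(c,q) - d(b,q), which is d(b,c) on the side A of a and -d(b,c) on the
   side D of d.  Trading ab for ac changes the index by |A| times the sum over
   q outside A of |ac| - |ab| + f(q), and trading cd for bd by |D| times the sum
   over q outside D of |bd| - |cd| - f(q).  In the combination with weights |D|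
   and |A| the values of f on the middle component cancel, and each vertex
   contributes at most 0 by the triangle inequality and the crossing inequality
   |ac| + |bd| <= |ab| + |cd|, with a or d contributing strictly less. *)

From Pilot Require Import Defs.
From HB Require Import structures.
From mathcomp Require Import all_boot all_order all_algebra.
From mathcomp Require Import reals.
From mathcomp Require Import ring lra.
From Stdlib Require Import ClassicalEpsilon.
Set Implicit Arguments. Unset Strict Implicit. Unset Printing Implicit Defensive.
Import Order.TTheory GRing.Theory Num.Theory.

Section Trees.
Variable T : finType.
Implicit Types (e : rel T) (x y z u v p q : T) (s : seq T).

Definition same_edge x y u v := (x == u) && (y == v) || (x == v) && (y == u).
Definition del_edge e u v : rel T := fun x y => e x y && ~~ same_edge x y u v.
Definition add_edge e u v : rel T := fun x y => e x y || same_edge x y u v.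

Lemma same_edgeC x y u v : same_edge x y u v = same_edge y x u v.
Proof. by rewrite /same_edge orbC andbC (andbC (x == u)). Qed.

Lemma same_edgeCr x y u v : same_edge x y u v = same_edge x y v u.
Proof. exact: orbC. Qed.

Lemma same_edge_sym x y u v : same_edge x y u v = same_edge u v x y.
Proof.
by rewrite /same_edge (eq_sym x u) (eq_sym y v) (eq_sym x v) (eq_sym y u) (andbC (v == x)).
Qed.

Lemma same_edge_trans x y u v p q :
  same_edge u v p q -> same_edge x y u v = same_edge x y p q.
Proof. by case/orP=> /andP[/eqP-> /eqP->] //; rewrite same_edgeCr. Qed.

Lemma del_edge_sub e u v : subrel (del_edge e u v) e.
Proof. by move=> x y /andP[]. Qed.

Lemma del_edgeC e u v : del_edge e u v =2 del_edge e v u.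
Proof. by move=> x y; rewrite /del_edge same_edgeCr. Qed.

Lemma del_edge_sym e u v : symmetric e -> symmetric (del_edge e u v).
Proof. by move=> He x y; rewrite /del_edge He same_edgeC. Qed.

Lemma add_edge_sym e u v : symmetric e -> symmetric (add_edge e u v).
Proof. by move=> He x y; rewrite /add_edge He same_edgeC. Qed.

Lemma add_edge_sub e u v : subrel e (add_edge e u v).
Proof. by move=> x y exy; rewrite /add_edge exy. Qed.

Lemma add_edge_ends e u v : add_edge e u v u v.
Proof. by rewrite /add_edge /same_edge !eqxx orbT. Qed.

Lemma connect_stable e (S : pred T) x y :
  (forall u v, e u v -> S u -> S v) -> S x -> connect e x y -> S y.
Proof.
move=> HS + /connectP[s + ->]; elim: s x => //= z s IH x Sx /andP[exz Hs].
exact: IH (HS _ _ exz Sx) Hs.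
Qed.

Lemma connect_add_edge e x y p q : connect (add_edge e x y) p q ->
  [|| connect e p q, connect e p x && connect e y q | connect e p y && connect e x q].
Proof.
pose S z := [|| connect e p z, connect e p x && connect e y z | connect e p y && connect e x z].
have S_end z : z \in [:: x; y] -> S z = connect e p x || connect e p y.
  rewrite !inE /S => /orP[]/eqP->; rewrite !connect0 !andbT;
  by case: (connect e p x); case: (connect e p y).
apply: (connect_stable (S := S)); last by rewrite /S connect0.
move=> a b /orP[eab|Habxy] Sa.
  have Hb z : connect e z a -> connect e z b by move/connect_trans; apply; apply: connect1.
  by rewrite /S; case/or3P: Sa => [/Hb ->|/andP[-> /Hb ->]|/andP[-> /Hb ->]]; rewrite ?orbT.
have [Ha Hb] : a \in [:: x; y] /\ b \in [:: x; y].
  by case/orP: Habxy => /andP[/eqP-> /eqP->]; rewrite !inE !eqxx ?orbT.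
by rewrite S_end // -(S_end a).
Qed.

Lemma connect_mono e e' : subrel e e' -> subrel (connect e) (connect e').
Proof. by move=> H; apply: connect_sub => x y /H; apply: connect1. Qed.

Lemma connect_through e w p q : symmetric e ->
  connect e w p -> connect e w q -> connect e p q.
Proof. by move=> He Hp; apply: connect_trans; rewrite (sym_connect_sym He). Qed.

Lemma exists_tpath e x y : connect e x y -> exists s, tpath e x y s.
Proof.
move=> /connectP[s Hs ->]; case: (shortenP Hs) => s' Hs' Hu _.
by exists s'; rewrite /tpath Hs' Hu eqxx.
Qed.

Lemma tpath_connect e x y s : tpath e x y s -> connect e x y.
Proof. by case/and3P=> Hs /eqP <- _; apply/connectP; exists s. Qed.

Lemma tpath_sub e e' x y s : subrel e e' -> tpath e x y s -> tpath e' x y s.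
Proof. by move=> H /and3P[Hs Hl Hu]; rewrite /tpath (sub_path H Hs) Hl Hu. Qed.

Lemma tpath_cons e x y z s : tpath e x y (z :: s) ->
  [/\ e x z, tpath e z y s & x \notin z :: s].
Proof. by case/and3P=> /andP[exz Hs] Hl /andP[Hx Hu]; split=> //; apply/and3P. Qed.

Lemma tpath_loop e x z s : ~ tpath e x x (z :: s).
Proof.
case/tpath_cons=> _ /and3P[_ /eqP Hl _]; apply/negP; rewrite negbK -Hl.
exact: mem_last.
Qed.

Lemma tpath_rev e x y s : symmetric e -> tpath e x y s -> tpath e y x (rev (belast x s)).
Proof.
move=> He /and3P[Hs /eqP Hl Hu].
have Erev : y :: rev (belast x s) = rev (x :: s) by rewrite [x :: s]lastI Hl rev_rcons.
rewrite /tpath Erev rev_uniq Hu andbT -Hl rev_path.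
rewrite (eq_path (e' := e)); last by move=> a b; rewrite /= He.
rewrite Hs /=; case: s {Hs Hl Hu Erev} => //= z s.
by rewrite rev_cons last_rcons.
Qed.

Lemma path_del_edge e x y s z : x \notin y :: s -> path e y s -> path (del_edge e x z) y s.
Proof.
move=> Hx; apply: (sub_in_path (P := predC1 x)); last first.
  by apply/allP => w Hw /=; apply: contraNneq Hx => <-.
by move=> a b /[!inE] Ha Hb Hab; rewrite /del_edge Hab /same_edge (negbTE Ha) (negbTE Hb) andbF.
Qed.

Lemma tpath_glue e x p q y s1 s2 (K : pred T) :
  tpath e x p s1 -> e p q -> tpath e q y s2 ->
  all K (x :: s1) -> all (predC K) (q :: s2) -> tpath e x y (s1 ++ q :: s2).
Proof.
move=> /and3P[P1 /eqP L1 U1] epq /and3P[P2 L2 U2] A1 A2.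
have U : uniq (x :: s1 ++ q :: s2).
  rewrite -cat_cons cat_uniq U1 U2 andbT; apply/hasPn => z /(allP A2) /= Kz.
  by apply: contraNN Kz => /(allP A1).
by rewrite /tpath cat_path P1 L1 /= epq P2 last_cat /= L2; move: U => /= ->.
Qed.

Lemma spanning_tree_sym e : spanning_tree e -> symmetric e.
Proof. by case=> [[]]. Qed.

Lemma spanning_tree_irr e x : spanning_tree e -> e x x = false.
Proof. by case=> [[_ H]] _ _; apply/negbTE/H. Qed.

Lemma spanning_tree_bridge e u v : spanning_tree e -> e u v ->
  ~ connect (del_edge e u v) u v.
Proof.
move=> Ht euv /exists_tpath[s /and3P[Hs /eqP Hl Hu]].
have Hsz : (2 <= size s)%N.
  case: s Hs Hl Hu => [|w [|w' s]] //=; first by move=> _ Huv; rewrite Huv spanning_tree_irr in euv.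
  by move=> /andP[+ _] Hw; rewrite /del_edge /same_edge Hw !eqxx andbF.
case: Ht => [[He _] _ Hac]; apply/negP: (Hac (u :: s) Hu Hsz).
by rewrite negbK /cycle rcons_path (sub_path (@del_edge_sub e u v) Hs) Hl He.
Qed.

Lemma tpath_uniq e x y s1 s2 : spanning_tree e ->
  tpath e x y s1 -> tpath e x y s2 -> s1 = s2.
Proof.
move=> Ht; elim: s1 x s2 => [|z s IH] x [|z' s'] //.
- by move=> /and3P[_ /eqP <- _] /tpath_loop.
- by move=> + /and3P[_ /eqP /= Exy _]; rewrite -Exy => /tpath_loop.
move=> /tpath_cons[exz Hs Hx] /tpath_cons[exz' Hs' Hx'].
have [Ezz'|Hzz'] := eqVneq z z'; first by subst z'; rewrite (IH _ _ Hs Hs').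
have HsF := del_edge_sym x z (spanning_tree_sym Ht).
case: (spanning_tree_bridge Ht exz); apply: (@connect_trans _ _ y).
  apply: (tpath_connect (s := z' :: s')); case/and3P: Hs' => Hp' Hl' Hu'.
  rewrite /tpath cons_uniq Hx' Hu' /= Hl' (path_del_edge _ Hx' Hp') !andbT.
  rewrite /del_edge exz' /same_edge eqxx (eq_sym z') (negbTE Hzz') /=.
  by apply: contraNN Hx' => /andP[_ /eqP ->]; apply: mem_head.
rewrite (sym_connect_sym HsF); apply: (tpath_connect (s := s)).
by case/and3P: Hs => Hp Hl Hu; rewrite /tpath Hl Hu (path_del_edge _ Hx Hp).
Qed.

Lemma bridges_acyclic e : symmetric e ->
  (forall u v, e u v -> ~ connect (del_edge e u v) u v) -> acyclic e.
Proof.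
move=> He Hbr [|x [|h t]] //= /and3P[Hx Ht Hu] Hsz.
apply/negP => /andP[exh]; rewrite rcons_path => /andP[Hp elx].
have Hl : last h t \in t by case: t Hsz {Hx Hp elx Hu Ht} => //= w t _; apply: mem_last.
apply: (Hbr _ _ exh); rewrite (sym_connect_sym (del_edge_sym x h He)).
apply/connectP; exists (rcons t x); last by rewrite last_rcons.
rewrite rcons_path (path_del_edge _ Hx Hp) /del_edge elx /same_edge eqxx andbT.
apply/norP; split; first by apply: contraNN Hx => /andP[/eqP <- _]; rewrite mem_last.
by apply: contraNneq Ht => <-.
Qed.

Section Side.
Variables (e : rel T) (u v : T).
Hypotheses (Ht : spanning_tree e) (Huv : e u v).
Local Notation F := (del_edge e u v).

Lemma connect_del_edgeC x y : connect F x y = connect F y x.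
Proof. exact/sym_connect_sym/del_edge_sym/spanning_tree_sym. Qed.

Lemma side_cover z : connect F u z || connect F v z.
Proof.
case: Ht => _ Hc _.
apply: (connect_stable (S := fun z => connect F u z || connect F v z) _ _ (Hc u z));
  last by rewrite connect0.
move=> a b eab /orP Ha; case Fab: (F a b).
  by case: Ha => /connect_trans/(_ (connect1 Fab)) ->; rewrite ?orbT.
move: Fab; rewrite /del_edge eab /= => /negbFE /orP[] /andP[_ /eqP ->];
  by rewrite connect0 ?orbT.
Qed.

Lemma side_disjoint z : connect F u z -> connect F v z -> False.
Proof.
move=> Huz Hvz; apply: (spanning_tree_bridge Ht Huv).
by apply: connect_trans Huz _; rewrite connect_del_edgeC.
Qed.

Lemma sideN z : ~~ connect F u z = connect F v z.
Proof.
case: (boolP (connect F u z)) => Huz /=.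
  by apply/esym/negP => /(side_disjoint Huz).
by move: (side_cover z); rewrite (negbTE Huz) => /= ->.
Qed.

Lemma same_side_connect p q : connect F u p = connect F u q -> connect F p q.
Proof.
have Hsame := connect_through (del_edge_sym u v (spanning_tree_sym Ht)).
case: (boolP (connect F u p)) => Hp Hpq.
  by apply: Hsame Hp _; rewrite -Hpq.
have Hq : ~~ connect F u q by rewrite -Hpq.
by rewrite sideN in Hp; rewrite sideN in Hq; apply: Hsame Hp Hq.
Qed.

Section Exchange.
Variables x y : T.
Hypotheses (Hx : connect F u x) (Hy : connect F v y).
Local Notation G := (add_edge F x y).

Let HsF : symmetric F := del_edge_sym u v (spanning_tree_sym Ht).

Let exchange_ends_apart : ~ connect F x y.
Proof. by move=> Cxy; apply: (side_disjoint (connect_trans Hx Cxy) Hy). Qed.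

Lemma add_edge_simple : simple_graph G.
Proof.
split=> [|z]; first exact: add_edge_sym.
rewrite /add_edge /del_edge (spanning_tree_irr z Ht) /=.
by apply: contra_notN exchange_ends_apart => /orP[]/andP[/eqP <- /eqP <-]; rewrite connect0.
Qed.

Lemma add_edge_connect p q : connect G p q.
Proof.
have Gx z : connect G x z.
  case/orP: (side_cover z) => Hz.
    exact: connect_mono (@add_edge_sub F x y) _ _ (connect_through HsF Hx Hz).
  apply: connect_trans (connect1 (add_edge_ends F x y)) _.
  exact: connect_mono (@add_edge_sub F x y) _ _ (connect_through HsF Hy Hz).
exact: connect_through (add_edge_sym x y HsF) (Gx p) (Gx q).
Qed.

Lemma add_edge_bridge p q : G p q -> ~ connect (del_edge G p q) p q.
Proof.
move=> Gpq; have [Hpq|NHpq] := boolP (same_edge p q x y).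
  have HGF : subrel (del_edge G p q) F.
    move=> a b /andP[/orP[//|Hab] Nab].
    by rewrite (same_edge_trans _ _ Hpq) Hab in Nab.
  move=> /(connect_mono HGF) Cpq; apply: exchange_ends_apart.
  by case/orP: Hpq Cpq => /andP[/eqP-> /eqP->] //; rewrite connect_del_edgeC.
have Fpq : F p q by case/orP: Gpq => // Hs; rewrite Hs in NHpq.
pose H := del_edge F p q.
have HGH : subrel (del_edge G p q) (add_edge H x y).
  by move=> a b /andP[/orP[Fab|Hab] Nab]; apply/orP; [left; apply/andP|right].
have CHF a b : connect H a b -> connect F b a.
  by move/(connect_mono (@del_edge_sub F p q)); rewrite connect_del_edgeC.
(* A path from p to q through the new edge would join x and y in F through p q. *)
move=> /(connect_mono HGH)/connect_add_edge/or3P[Cpq|/andP[Cpx Cyq]|/andP[Cpy Cxq]].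
- apply: (spanning_tree_bridge Ht (del_edge_sub Fpq)); apply: connect_mono Cpq.
  by move=> a b /andP[/del_edge_sub eab Nab]; rewrite /del_edge eab Nab.
- apply: exchange_ends_apart.
  exact: connect_trans (CHF _ _ Cpx) (connect_trans (connect1 Fpq) (CHF _ _ Cyq)).
- apply: exchange_ends_apart; rewrite connect_del_edgeC.
  exact: connect_trans (CHF _ _ Cpy) (connect_trans (connect1 Fpq) (CHF _ _ Cxq)).
Qed.

Lemma add_edge_spanning_tree : spanning_tree G.
Proof.
split; [exact: add_edge_simple | exact: add_edge_connect |].
exact: bridges_acyclic (add_edge_sym x y HsF) add_edge_bridge.
Qed.

End Exchange.
End Side.

Lemma edge_orient_toward e p q z : spanning_tree e -> e p q ->
  exists a b, [/\ (a = p /\ b = q) \/ (a = q /\ b = p), e a b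
                & connect (del_edge e a b) b z].
Proof.
move=> Ht epq; case/orP: (@side_cover e p q Ht z) => Hz; last by exists p, q; split => //; left.
exists q, p; split; first by right.
  by rewrite (spanning_tree_sym Ht).
by rewrite (eq_connect (del_edgeC e q p)).
Qed.

Lemma same_edge_swap a b p q x y : (a = p /\ b = q) \/ (a = q /\ b = p) ->
  same_edge a b x y = same_edge p q x y.
Proof. by case=> [[-> ->]|[-> ->]] //; apply: same_edgeC. Qed.

End Trees.

Local Open Scope ring_scope.

Section Plane.
Variable R : rcfType.
Implicit Types (A B C D O : R * R).

Definition pdist A B : R := Num.sqrt ((A.1 - B.1) ^+ 2 + (A.2 - B.2) ^+ 2).

Lemma pdist_ge0 A B : 0 <= pdist A B.
Proof. exact: sqrtr_ge0. Qed.

Lemma pdistC A B : pdist A B = pdist B A.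
Proof. by rewrite /pdist -(sqrrN (A.1 - _)) -(sqrrN (A.2 - _)) !opprB. Qed.

Lemma pdist_sqr A B : pdist A B ^+ 2 = (A.1 - B.1) ^+ 2 + (A.2 - B.2) ^+ 2.
Proof. by rewrite sqr_sqrtr // addr_ge0 // sqr_ge0. Qed.

Lemma pdist_eq0 A B : pdist A B = 0 -> A = B.
Proof.
move=> /eqP; rewrite sqrtr_eq0 => H.
have h1 : (A.1 - B.1) ^+ 2 = 0.
  by apply/eqP; rewrite eq_le sqr_ge0 andbT; apply: le_trans H; rewrite lerDl sqr_ge0.
have h2 : (A.2 - B.2) ^+ 2 = 0.
  by apply/eqP; rewrite eq_le sqr_ge0 andbT; apply: le_trans H; rewrite lerDr sqr_ge0.
move: h1 h2 => /eqP; rewrite sqrf_eq0 subr_eq0 => /eqP e1 /eqP.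
rewrite sqrf_eq0 subr_eq0 => /eqP e2.
by move: e1 e2; case: A {H} => a1 a2; case: B => b1 b2 /= -> ->.
Qed.

Lemma pdist_triangle A B C : pdist A C <= pdist A B + pdist B C.
Proof.
have H1 := pdist_sqr A B; have H2 := pdist_sqr B C.
have g1 := pdist_ge0 A B; have g2 := pdist_ge0 B C.
set s1 := pdist A B in H1 g1 *; set s2 := pdist B C in H2 g2 *.
have Hs : 0 <= s1 + s2 by rewrite addr_ge0.
rewrite /pdist -(ger0_norm Hs) -sqrtr_sqr ler_sqrt ?sqr_ge0 //.
set x1 := A.1 - B.1 in H1 *; set y1 := A.2 - B.2 in H1 *.
set x2 := B.1 - C.1 in H2 *; set y2 := B.2 - C.2 in H2 *.
have -> : A.1 - C.1 = x1 + x2 by rewrite /x1 /x2; ring.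
have -> : A.2 - C.2 = y1 + y2 by rewrite /y1 /y2; ring.
(* Cauchy--Schwarz, via Lagrange's identity *)
have CS : (x1 * x2 + y1 * y2) ^+ 2 <= (s1 * s2) ^+ 2.
  rewrite exprMn H1 H2.
  have -> : (x1 ^+ 2 + y1 ^+ 2) * (x2 ^+ 2 + y2 ^+ 2) =
    (x1 * x2 + y1 * y2) ^+ 2 + (x1 * y2 - x2 * y1) ^+ 2 by ring.
  by rewrite lerDl sqr_ge0.
have p12 : 0 <= s1 * s2 by rewrite mulr_ge0.
have C2 : x1 * x2 + y1 * y2 <= s1 * s2.
  case: (lerP (x1 * x2 + y1 * y2) 0) => h; first exact: le_trans h p12.
  by rewrite -(ler_pXn2r (n := 2)) // nnegrE ltW.
have -> : (s1 + s2) ^+ 2 = s1 ^+ 2 + s2 ^+ 2 + 2 * (s1 * s2) by ring.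
rewrite H1 H2; nra.
Qed.

Lemma pdist_scale A B C (k : R) : 0 <= k ->
  C.1 - A.1 = k * (B.1 - A.1) -> C.2 - A.2 = k * (B.2 - A.2) ->
  pdist A C = k * pdist A B.
Proof.
move=> hk h1 h2; rewrite pdistC /pdist h1 h2 !exprMn -mulrDr sqrtrM ?sqr_ge0 //.
by rewrite sqrtr_sqr ger0_norm // -/(pdist B A) pdistC.
Qed.

Lemma crossing_diagonals_le A B C D (t u : R) : 0 < t < 1 -> 0 < u < 1 ->
  (1 - t) * A.1 + t * B.1 = (1 - u) * C.1 + u * D.1 ->
  (1 - t) * A.2 + t * B.2 = (1 - u) * C.2 + u * D.2 ->
  pdist A C + pdist B D <= pdist A B + pdist C D.
Proof.
move=> /andP[t0 t1] /andP[u0 u1] E1 E2.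
pose O := ((1 - t) * A.1 + t * B.1, (1 - t) * A.2 + t * B.2).
have AO : pdist A O = t * pdist A B by apply: pdist_scale; rewrite ?ltW //=; ring.
have BO : pdist B O = (1 - t) * pdist B A.
  by apply: pdist_scale; rewrite ?subr_ge0 ?ltW //=; ring.
have CO : pdist C O = u * pdist C D.
  by apply: pdist_scale; rewrite ?ltW //= ?E1 ?E2; ring.
have DO : pdist D O = (1 - u) * pdist D C.
  by apply: pdist_scale; rewrite ?subr_ge0 ?ltW //= ?E1 ?E2; ring.
have T1 := pdist_triangle A O C; have T2 := pdist_triangle B O D.
rewrite (pdistC O C) (pdistC O D) in T1 T2.
rewrite (pdistC B A) (pdistC D C) in BO DO.
lra.
Qed.

(* Segments crossing at an interior point and sharing the endpoint [B] are
   collinear: [D] lies on [AB] or [A] lies on [DB]. *)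
Lemma crossing_at_endpoint A B D (t u : R) : 0 < t < 1 -> 0 < u < 1 ->
  (1 - t) * A.1 + t * B.1 = (1 - u) * B.1 + u * D.1 ->
  (1 - t) * A.2 + t * B.2 = (1 - u) * B.2 + u * D.2 ->
  pdist A D + pdist D B <= pdist A B \/ pdist D A + pdist A B <= pdist D B.
Proof.
move=> /andP[t0 t1] /andP[u0 u1] E1 E2.
have un : u != 0 by rewrite gt_eqF.
pose l := (1 - t) / u.
have l0 : 0 < l by rewrite /l divr_gt0 // subr_gt0.
have K1 : u * (D.1 - B.1) = (1 - t) * (A.1 - B.1) by move: E1; lra.
have K2 : u * (D.2 - B.2) = (1 - t) * (A.2 - B.2) by move: E2; lra.
have F1 : D.1 - B.1 = l * (A.1 - B.1) by rewrite /l; apply: (mulfI un); rewrite K1; field.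
have F2 : D.2 - B.2 = l * (A.2 - B.2) by rewrite /l; apply: (mulfI un); rewrite K2; field.
case: (lerP l 1) => hl.
  left.
  have BD : pdist B D = l * pdist B A by apply: pdist_scale; rewrite ?ltW.
  have AD : pdist A D = (1 - l) * pdist A B.
    apply: pdist_scale; rewrite ?subr_ge0 //.
      by rewrite -[D.1](subrK B.1) F1; ring.
    by rewrite -[D.2](subrK B.2) F2; ring.
  rewrite AD (pdistC D B) BD (pdistC B A); lra.
right.
have ln : l != 0 by rewrite gt_eqF.
have G1 : A.1 - B.1 = l^-1 * (D.1 - B.1) by rewrite F1 mulrA mulVf // mul1r.
have G2 : A.2 - B.2 = l^-1 * (D.2 - B.2) by rewrite F2 mulrA mulVf // mul1r.
have BA : pdist B A = l^-1 * pdist B D by apply: pdist_scale; rewrite ?invr_ge0 ?ltW.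
have DA : pdist D A = (1 - l^-1) * pdist D B.
  apply: pdist_scale; rewrite ?subr_ge0 ?invf_le1 ?ltW //.
    by rewrite -[A.1](subrK B.1) G1; ring.
  by rewrite -[A.2](subrK B.2) G2; ring.
rewrite DA (pdistC A B) BA (pdistC B D); lra.
Qed.

End Plane.

Section PairSums.
Variables (I : finType) (V : zmodType).
Implicit Types (f : I -> I -> V) (U : pred I).

Lemma sum_pairs_double f : (forall p q, f p q = f q p) -> (forall p, f p p = 0) ->
  \sum_p \sum_q f p q = (\sum_p \sum_(q | (enum_rank p < enum_rank q)%N) f p q) *+ 2.
Proof.
move=> fC f0.
have split_row p : \sum_q f p q = \sum_(q | (enum_rank p < enum_rank q)%N) f p q
                                  + \sum_(q | (enum_rank q < enum_rank p)%N) f p q.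
  rewrite (bigID (fun q => (enum_rank p < enum_rank q)%N)) /=; congr (_ + _).
  rewrite (bigID (fun q => (enum_rank q < enum_rank p)%N)) /= [X in _ + X]big1 ?addr0.
    by apply: eq_bigl => q; rewrite -leqNgt; apply: andb_idl; apply: ltnW.
  move=> q /andP[]; rewrite -!leqNgt => h1 h2.
  suff -> : q = p by apply: f0.
  by apply/enum_rank_inj/val_inj/eqP; rewrite eqn_leq h1 h2.
rewrite (eq_bigr _ (fun p _ => split_row p)) big_split /= mulr2n; congr (_ + _).
under [RHS]eq_bigr do rewrite big_mkcond.
rewrite exchange_big /=; apply: eq_bigr => p _; rewrite big_mkcond.
by apply: eq_bigr => q _; case: ifP => // _; rewrite fC.
Qed.

Lemma sum_cut_double f U : (forall p q, f p q = f q p) ->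
  (forall p q, U p = U q -> f p q = 0) ->
  \sum_p \sum_q f p q = (\sum_(p | U p) \sum_(q | ~~ U q) f p q) *+ 2.
Proof.
move=> fC f0.
have cut p : \sum_q f p q = \sum_(q | U q != U p) f p q.
  rewrite (bigID (fun q => U q != U p)) /= [X in _ + X]big1 ?addr0 // => q /negPn/eqP/esym.
  exact: f0.
rewrite (eq_bigr _ (fun p _ => cut p)) (bigID U) /= mulr2n; congr (_ + _).
  by apply: eq_bigr => p Up; apply: eq_bigl => q; rewrite Up; case: (U q).
rewrite (eq_bigr (fun p => \sum_(q | U q) f p q)); last first.
  by move=> p /negbTE Up; apply: eq_bigl => q; rewrite Up; case: (U q).
by rewrite exchange_big /=; apply: eq_bigr => q _; apply: eq_bigr => p _.
Qed.

End PairSums.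

Lemma sumr_lt0_witness (I : finType) (R : numDomainType) (P : pred I) (F : I -> R) i :
  P i -> F i < 0 -> (forall j, P j -> F j <= 0) -> \sum_(j | P j) F j < 0.
Proof.
move=> Pi Fi Fle; rewrite (bigD1 i) //= -[ltRHS](addr0 0); apply: ltr_leD => //.
by apply: sumr_le0 => j /andP[Pj _]; apply: Fle.
Qed.

Lemma sumr1_gt0 (I : finType) (R : numDomainType) (P : pred I) i :
  P i -> 0 < \sum_(j | P j) (1 : R).
Proof.
move=> Pi; rewrite -oppr_lt0 -sumrN.
by apply: (sumr_lt0_witness (i := i)) => // [|j _]; rewrite ?ltrN10 ?lerN10.
Qed.

Section TreeDistances.
Variables (R : realType) (T : finType) (pos : T -> R * R).
Implicit Types (e G : rel T) (x y z u v p q : T) (s : seq T).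
Local Notation dist := (edist pos).
Local Notation ww := (walk_weight pos).
Local Notation delta := (delta pos).
Local Notation wiener := (wiener pos).

Lemma edistC x y : dist x y = dist y x.
Proof. exact: pdistC. Qed.

Lemma edist_ge0 x y : 0 <= dist x y.
Proof. exact: pdist_ge0. Qed.

Lemma edist_triangle x y z : dist x z <= dist x y + dist y z.
Proof. exact: pdist_triangle. Qed.

Lemma edist_gt0 x y : injective pos -> x != y -> 0 < dist x y.
Proof.
move=> pos_inj Hxy; rewrite lt_def edist_ge0 andbT.
by apply: contraNneq Hxy => /pdist_eq0/pos_inj ->.
Qed.

Lemma walk_weight_cat x s1 s2 : ww x (s1 ++ s2) = ww x s1 + ww (last x s1) s2.
Proof. by elim: s1 x => [|y s1 IH] x /=; rewrite ?add0r // IH addrA. Qed.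

Lemma edist_le_walk_weight x s : dist x (last x s) <= ww x s.
Proof.
elim: s x => [|y s IH] x /=; first by rewrite /edist !subrr expr0n /= addr0 sqrtr0.
by apply: le_trans (edist_triangle x y (last y s)) _; rewrite lerD2l.
Qed.

Lemma walk_weight_rev x s : ww (last x s) (rev (belast x s)) = ww x s.
Proof.
elim: s x => [|y s IH] x //=.
rewrite rev_cons -cats1 walk_weight_cat IH /= addr0 addrC edistC; congr (_ + _).
by case: s {IH} => //= z s; rewrite rev_cons last_rcons.
Qed.

Lemma delta_tpath e p q s : spanning_tree e -> tpath e p q s -> delta e p q = ww p s.
Proof.
move=> Ht Hs; rewrite /Defs.delta.
have H : tpath e p q (epsilon (inhabits [::]) (fun s => tpath e p q s)).
  by apply: (epsilon_spec (inhabits [::]) (fun s => tpath e p q s)); exists s.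
by rewrite (tpath_uniq Ht H Hs).
Qed.

Lemma delta_refl e p : spanning_tree e -> delta e p p = 0.
Proof. by move=> Ht; rewrite (@delta_tpath _ _ _ [::] Ht) // /tpath /= eqxx. Qed.

Lemma deltaC e p q : spanning_tree e -> delta e p q = delta e q p.
Proof.
move=> Ht; have [_ Hc _] := Ht; have [s Hs] := exists_tpath (Hc p q).
rewrite (delta_tpath Ht Hs) (delta_tpath Ht (tpath_rev (spanning_tree_sym Ht) Hs)).
by case/and3P: Hs => _ /eqP <- _; rewrite walk_weight_rev.
Qed.

Lemma delta_edge e u v : spanning_tree e -> e u v -> delta e u v = dist u v.
Proof.
move=> Ht euv; rewrite (@delta_tpath _ _ _ [:: v] Ht) /= ?addr0 //.
have Nuv : u != v by apply: contraTneq euv => ->; rewrite (spanning_tree_irr v Ht).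
by rewrite /tpath /= euv eqxx inE Nuv.
Qed.

Lemma edist_le_delta e p q : spanning_tree e -> dist p q <= delta e p q.
Proof.
move=> Ht; have [_ Hc _] := Ht; have [s Hs] := exists_tpath (Hc p q).
by rewrite (delta_tpath Ht Hs); case/and3P: Hs => _ /eqP <- _; apply: edist_le_walk_weight.
Qed.

Lemma wiener_cut e e' (U : pred T) : spanning_tree e -> spanning_tree e' ->
  (forall p q, U p = U q -> delta e' p q = delta e p q) ->
  wiener e' - wiener e = \sum_(p | U p) \sum_(q | ~~ U q) (delta e' p q - delta e p q).
Proof.
move=> Ht Ht' Hsame; pose h p q := delta e' p q - delta e p q.
have hC p q : h p q = h q p by rewrite /h (deltaC _ _ Ht) (deltaC _ _ Ht').
have h0 p q : U p = U q -> h p q = 0 by move/Hsame; rewrite /h => ->; rewrite subrr.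
apply/eqP; rewrite -(eqr_pMn2r (n := 2)) // -(sum_cut_double hC h0).
rewrite (sum_pairs_double hC (fun p => h0 p p erefl)) /Defs.wiener -sumrB.
by under eq_bigr do rewrite -sumrB.
Qed.

Section Side.
Variables (e : rel T) (u v : T).
Hypotheses (Ht : spanning_tree e) (Huv : e u v).
Local Notation F := (del_edge e u v).

Lemma delta_same_side G p q : spanning_tree G -> subrel F G -> connect F p q ->
  delta G p q = delta e p q.
Proof.
move=> HG HFG /exists_tpath[s Hs]; rewrite (delta_tpath HG (tpath_sub HFG Hs)).
by rewrite (delta_tpath Ht (tpath_sub (@del_edge_sub _ e u v) Hs)).
Qed.

Lemma delta_cross G x y p q : spanning_tree G -> subrel F G -> G x y ->
  connect F u x -> connect F v y -> connect F u p -> connect F v q ->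
  delta G p q = delta e p x + dist x y + delta e y q.
Proof.
move=> HG HFG Gxy Hx Hy Hp Hq.
have HsF := del_edge_sym u v (spanning_tree_sym Ht).
have [s1 Hs1] := exists_tpath (connect_through HsF Hp Hx).
have [s2 Hs2] := exists_tpath (connect_through HsF Hy Hq).
have A1 : all (connect F u) (p :: s1).
  case/and3P: (Hs1) => P1 _ _; apply/allP => z /(path_connect P1).
  exact: connect_trans Hp.
have A2 : all (predC (connect F u)) (y :: s2).
  case/and3P: (Hs2) => P2 _ _; apply/allP => z /(path_connect P2) Cyz /=.
  by rewrite sideN //; apply: connect_trans Hy Cyz.
rewrite (delta_tpath HG (tpath_glue (tpath_sub HFG Hs1) Gxy (tpath_sub HFG Hs2) A1 A2)).
rewrite walk_weight_cat /=; case/and3P: (Hs1) => _ /eqP -> _.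
have HFe := @del_edge_sub _ e u v.
by rewrite (delta_tpath Ht (tpath_sub HFe Hs1)) (delta_tpath Ht (tpath_sub HFe Hs2)) addrA.
Qed.

Lemma delta_le_edge q : delta e u q <= dist u v + delta e v q.
Proof.
have cross := delta_cross Ht (@del_edge_sub _ e u v) Huv (connect0 F u) (connect0 F v).
case: (boolP (connect F u q)) => Hq.
  have := cross _ _ Hq (connect0 F v).
  rewrite (delta_refl _ Ht) [delta e q u](deltaC _ _ Ht) [delta e q v](deltaC _ _ Ht).
  by have := edist_ge0 u v; lra.
rewrite sideN // in Hq.
by rewrite (cross _ _ (connect0 F u) Hq) (delta_refl _ Ht) add0r.
Qed.

Lemma wiener_add_edge x y : connect F u x -> connect F v y ->
  wiener (add_edge F x y) - wiener e =
  \sum_(p | connect F u p) \sum_(q | ~~ connect F u q)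
    (delta e p x + dist x y + delta e y q - (delta e p u + dist u v + delta e v q)).
Proof.
move=> Hx Hy; have Ht' := add_edge_spanning_tree Ht Huv Hx Hy.
have HFG := @add_edge_sub _ F x y; have Gxy := add_edge_ends F x y.
rewrite (wiener_cut (U := connect F u) Ht Ht'); last first.
  by move=> p q /(same_side_connect Ht Huv); apply: delta_same_side.
apply: eq_bigr => p Hp; apply: eq_bigr => q; rewrite sideN // => Hq.
rewrite (delta_cross Ht' HFG Gxy Hx Hy Hp Hq).
by rewrite (delta_cross Ht (@del_edge_sub _ e u v) Huv (connect0 F u) (connect0 F v) Hp Hq).
Qed.

End Side.
End TreeDistances.

Section Improvement.
Variables (R : realType) (T : finType) (pos : T -> R * R).
Hypothesis pos_inj : injective pos.
Implicit Types (e : rel T) (a b c d p q r s : T).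
Local Notation dist := (edist pos).
Local Notation delta := (delta pos).
Local Notation wiener := (wiener pos).

Definition wiener_improvable e := exists e', spanning_tree e' /\ wiener e' < wiener e.

Lemma segments_crossC p q r s :
  segments_cross pos p q r s -> segments_cross pos q p r s.
Proof.
case=> t [u [/andP[t0 t1] u01 E1 E2]]; exists (1 - t), u; split => //.
- by apply/andP; split; lra.
- by rewrite -E1; ring.
- by rewrite -E2; ring.
Qed.

Lemma segments_crossCr p q r s :
  segments_cross pos p q r s -> segments_cross pos p q s r.
Proof.
case=> t [u [t01 /andP[u0 u1] E1 E2]]; exists t, (1 - u); split => //.
- by apply/andP; split; lra.
- by rewrite E1; ring.
- by rewrite E2; ring.
Qed.

Lemma segments_cross_swap a b c d p q r s :
  (a = p /\ b = q) \/ (a = q /\ b = p) -> (c = r /\ d = s) \/ (c = s /\ d = r) ->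
  segments_cross pos p q r s -> segments_cross pos a b c d.
Proof.
case=> [[-> ->]|[-> ->]] [[-> ->]|[-> ->]] // Hcr;
  by [apply: segments_crossCr | apply: segments_crossC | apply/segments_crossC/segments_crossCr].
Qed.

Lemma shortcut_improvable e a b d : spanning_tree e -> e a b -> e b d -> a != d ->
  dist a d + dist d b <= dist a b -> wiener_improvable e.
Proof.
move=> Ht eab ebd Nad Hshort.
have Nbd : b != d by apply: contraTneq ebd => ->; rewrite (spanning_tree_irr d Ht).
have Hd : connect (del_edge e a b) b d.
  apply: connect1; rewrite /del_edge ebd /same_edge eqxx.
  by rewrite (eq_sym d a) (negbTE Nad) (eq_sym d b) (negbTE Nbd) andbF.
exists (add_edge (del_edge e a b) a d).
split; first exact: (add_edge_spanning_tree Ht eab (connect0 _ a) Hd).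
rewrite -subr_lt0 (wiener_add_edge pos Ht eab (connect0 _ a) Hd).
have edb : e d b by rewrite (spanning_tree_sym Ht).
have bd0 := edist_gt0 pos_inj Nbd.
have term_le q : delta e d q - delta e b q <= dist d b.
  by have := delta_le_edge pos Ht edb q; lra.
apply: (sumr_lt0_witness (i := a)) => [||p _]; rewrite ?connect0 //.
  apply: (sumr_lt0_witness (i := d)) => [||q _]; first by rewrite (sideN Ht eab).
    rewrite !(delta_refl pos _ Ht) [delta e b d](delta_edge pos Ht ebd).
    by move: Hshort; rewrite (edistC pos d b); lra.
  by have := term_le q; lra.
by apply: sumr_le0 => q _; have := term_le q; lra.
Qed.

Section Crossing.
Variables (e : rel T) (a b c d : T).
Hypotheses (Ht : spanning_tree e) (eab : e a b) (ecd : e c d) (Nbc : b != c).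
Hypotheses (Hbc : connect (del_edge e a b) b c) (Hcb : connect (del_edge e c d) c b).
Hypothesis Hshort : dist a c + dist b d <= dist a b + dist c d.

Local Notation A := (connect (del_edge e a b) a).
Local Notation C := (connect (del_edge e c d) c).
Let f q := delta e c q - delta e b q.

Let f_on_A q : A q -> f q = delta e b c.
Proof.
move=> Hq; have cross :=
  delta_cross pos Ht eab Ht (@del_edge_sub _ e a b) eab (connect0 _ a) (connect0 _ b).
rewrite /f (deltaC pos c q Ht) (deltaC pos b q Ht) (cross _ _ Hq Hbc) (cross _ _ Hq (connect0 _ b)).
by rewrite (delta_refl pos _ Ht); ring.
Qed.

Let f_off_C q : ~~ C q -> f q = - delta e b c.
Proof.
rewrite sideN // => Hq.
have cross := delta_cross pos Ht ecd Ht (@del_edge_sub _ e c d) ecd (connect0 _ c) (connect0 _ d).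
rewrite /f (cross _ _ Hcb Hq) (cross _ _ (connect0 _ c) Hq) (delta_refl pos _ Ht); ring.
Qed.

Let delta_bc_gt0 : 0 < delta e b c.
Proof. exact: lt_le_trans (edist_gt0 pos_inj Nbc) (edist_le_delta pos _ _ Ht). Qed.

(* [f] takes opposite nonzero values on the two sides, which are thus disjoint. *)
Let A_sub_C q : A q -> C q.
Proof.
move=> Hq; apply: contraT => /f_off_C; rewrite (f_on_A Hq).
by have := delta_bc_gt0; lra.
Qed.

Let P := dist a c - dist a b.
Let Q := dist b d - dist c d.

Let wiener_exchange_ab : wiener (add_edge (del_edge e a b) a c) - wiener e =
  (\sum_(p | A p) 1) * \sum_(q | ~~ A q) (P + f q).
Proof.
rewrite (wiener_add_edge pos Ht eab (connect0 _ a) Hbc) mulr_suml.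
apply: eq_bigr => p _; rewrite mul1r; apply: eq_bigr => q _; rewrite /P /f; ring.
Qed.

Let wiener_exchange_cd : wiener (add_edge (del_edge e c d) b d) - wiener e =
  (\sum_(q | ~~ C q) 1) * \sum_(p | C p) (Q - f p).
Proof.
rewrite (wiener_add_edge pos Ht ecd Hcb (connect0 _ d)) mulr_sumr.
apply: eq_bigr => p _; rewrite mulr_suml; apply: eq_bigr => q _.
by rewrite /Q /f (deltaC pos c p Ht) (deltaC pos b p Ht); ring.
Qed.

Let phi q := (if ~~ A q then P + f q else 0) + (if C q then Q - f q else 0).

Let phi_le0 q : phi q <= 0.
Proof.
have := delta_bc_gt0; have := edist_le_delta pos b c Ht.
have := edist_triangle pos a b c; have := edist_triangle pos b c d.
rewrite /phi; case: (boolP (A q)) => [Aq|nAq] /=.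
  by rewrite (A_sub_C Aq) (f_on_A Aq) /Q; lra.
case: (boolP (C q)) => [_|/f_off_C ->]; last by rewrite /P; lra.
by move: Hshort; rewrite /P /Q; lra.
Qed.

Let sum_phi_lt0 : \sum_q phi q < 0.
Proof.
have nCd : ~~ C d by rewrite sideN ?connect0.
have phi_a : phi a = Q - delta e b c.
  by rewrite /phi connect0 (A_sub_C (connect0 _ a)) (f_on_A (connect0 _ a)) /=; ring.
have phi_d : phi d = P - delta e b c.
  by rewrite /phi (negbTE nCd) (contraNN (@A_sub_C d) nCd) (f_off_C nCd) /=; ring.
have := delta_bc_gt0; case: (lerP P 0) => [P_le0|P_gt0] bc_gt0.
  by apply: (sumr_lt0_witness (i := d) _ _ (fun q _ => phi_le0 q)); rewrite ?phi_d; lra.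
apply: (sumr_lt0_witness (i := a) _ _ (fun q _ => phi_le0 q)) => //; rewrite phi_a.
by move: Hshort; rewrite /P /Q in P_gt0 *; lra.
Qed.

Lemma crossing_improvable : wiener_improvable e.
Proof.
pose e1 := add_edge (del_edge e a b) a c; pose e2 := add_edge (del_edge e c d) b d.
pose alpha := \sum_(p | A p) (1 : R); pose gamma := \sum_(q | ~~ C q) (1 : R).
have alpha_gt0 : 0 < alpha := sumr1_gt0 _ (connect0 _ a).
have gamma_gt0 : 0 < gamma by apply: (@sumr1_gt0 _ _ _ d); rewrite sideN ?connect0.
have combine : gamma * (wiener e1 - wiener e) + alpha * (wiener e2 - wiener e) =
               alpha * gamma * \sum_q phi q.
  rewrite wiener_exchange_ab wiener_exchange_cd /phi [X in _ = _ * X]big_split -!big_mkcond.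
  by rewrite /= -/alpha -/gamma; ring.
case: (ltrP (wiener e1) (wiener e)) => [W1|W1].
  by exists e1; split => //; exact: (add_edge_spanning_tree Ht eab (connect0 _ a) Hbc).
case: (ltrP (wiener e2) (wiener e)) => [W2|W2].
  by exists e2; split => //; exact: (add_edge_spanning_tree Ht ecd Hcb (connect0 _ d)).
have : 0 <= gamma * (wiener e1 - wiener e) + alpha * (wiener e2 - wiener e).
  by rewrite addr_ge0 // mulr_ge0 ?subr_ge0 // ltW.
by rewrite combine pmulr_rge0 ?mulr_gt0 // leNgt sum_phi_lt0.
Qed.

End Crossing.

Lemma touching_edges_improvable e a b d : spanning_tree e -> e a b -> e b d ->
  a != d -> segments_cross pos a b b d -> wiener_improvable e.
Proof.
move=> Ht eab ebd Nad [t [u [t01 u01 E1 E2]]].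
case: (crossing_at_endpoint t01 u01 E1 E2) => Hshort.
  exact: shortcut_improvable Ht eab ebd Nad Hshort.
have eba : e b a by rewrite (spanning_tree_sym Ht).
have edb : e d b by rewrite (spanning_tree_sym Ht).
by apply: shortcut_improvable Ht edb eba _ Hshort; rewrite eq_sym.
Qed.

Lemma crossing_edges_improvable e p q r s : spanning_tree e -> e p q -> e r s ->
  ~~ same_edge p q r s -> segments_cross pos p q r s -> wiener_improvable e.
Proof.
move=> Ht epq ers Npqrs Hcr.
have [a [b [Eab eab Hbr]]] := edge_orient_toward r Ht epq.
have [d [c [Edc edc Hcb]]] := edge_orient_toward b Ht ers.
have Ecd : (c = r /\ d = s) \/ (c = s /\ d = r) by case: Edc => [[-> ->]|[-> ->]]; [right|left].
have ecd : e c d by rewrite (spanning_tree_sym Ht).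
rewrite (eq_connect (del_edgeC e d c)) in Hcb.
have {}Hcr : segments_cross pos a b c d := segments_cross_swap Eab Ecd Hcr.
have Nabcd : ~~ same_edge a b c d.
  by rewrite (same_edge_swap _ _ Eab) same_edge_sym (same_edge_swap _ _ Ecd) same_edge_sym.
have [Ebc|Nbc] := eqVneq b c.
  rewrite -{c}Ebc in Hcr ecd Nabcd {Hcb Edc Ecd edc}.
  apply: touching_edges_improvable Ht eab ecd _ Hcr.
  by apply: contraNneq Nabcd => ->; rewrite /same_edge !eqxx orbT.
have Hbc : connect (del_edge e a b) b c.
  have Hbs : connect (del_edge e a b) b s.
    apply: connect_trans Hbr (connect1 _); rewrite /del_edge ers same_edge_sym.
    by rewrite (same_edge_swap _ _ Eab).
  by case: Ecd => [[-> _]|[-> _]].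
have [t [u [t01 u01 E1 E2]]] := Hcr.
exact: crossing_improvable Ht eab ecd Nbc Hbc Hcb (crossing_diagonals_le t01 u01 E1 E2).
Qed.

End Improvement.

Theorem theorem1 (R : realType) (T : finType) (pos : T -> R * R)
  (pos_inj : injective pos) (e : rel T)
  (He : spanning_tree e)
  (Hmin : forall e' : rel T, spanning_tree e' -> wiener pos e <= wiener pos e') :
  plane_tree pos e.
Proof.
move=> p q r s epq ers Hne Hcr.
have [e' [He' Hlt]] := crossing_edges_improvable pos_inj He epq ers Hne Hcr.
by have := Hmin e' He'; rewrite leNgt Hlt.
Qed.
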